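(* Let $T$ be a pre-truss and let $P$ be a paragon in $T$. Then $P$ is a completely prime paragon if and only if the quotient pre-truss $T/P$ is a domain.
   Context: A heap is a set with a ternary operation $[-,-,-]$ satisfying $[a_1,a_2,[a_3,a_4,a_5]]=[[a_1,a_2,a_3],a_4,a_5]$ and $[a,a,b]=b=[b,a,a]$. A normal sub-heap of $H$ is a non-empty subset $S$ closed under $[-,-,-]$ with $[[a,e,s],a,e]\in S$ for all $a\in H$, $e,s\in S$; $a\sim_S b$ iff $[a,b,s]\in S$ for some (equivalently all) $s\in S$. A pre-truss is a heap with an associative binary operation (juxtaposition). A sub-heap $S$ is closed if $[ts',ts,s]\in S$ and $[s't,st,s]\in S$ for all $s,s'\in S$, $t\in T$. A paragon is a non-empty normal sub-heap $P$ all of whose $\sim_P$-classes are closed sub-heaps; $T/P$ is then a pre-truss with $\bar a\bar b=\overline{ab}$. An ideal is a normal sub-heap $I$ with $ti\in I$ and $it\in I$ for all $t\in T$, $i\in I$. An element $a$ is an absorber if $ta=a=at$ for all $t$; it is unique if it exists, and $T^{\mathrm{Abs}}$ denotes $T$ minus its absorber (or $T$ itself if there is none). An element $a\in T^{\mathrm{Abs}}$ is regular if for all $b\neq c$ in $T$, $ab\neq ac$ and $ba\neq ca$. A pre-truss is a domain if all elements of $T^{\mathrm{Abs}}$ are regular. For $p\in P$, $a\in T$ write $P_p^a=\{[q,p,a]\mid q\in P\}$. A non-empty paragon $P$ is completely prime if for all $p\in P$ and $a,b,c\in T$: $[ab,ac,p]\in P$ implies that $P_p^a$ is an ideal or $[b,c,p]\in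 P$; and $[ba,ca,p]\in P$ implies that $P_p^a$ is an ideal or $[b,c,p]\in P$. *)

Set Implicit Arguments.

Record PreTruss := {
  carrier :> Type;
  br : carrier -> carrier -> carrier -> carrier;
  mul : carrier -> carrier -> carrier;
  br_assoc : forall a1 a2 a3 a4 a5,
      br a1 a2 (br a3 a4 a5) = br (br a1 a2 a3) a4 a5;
  br_mal_l : forall a b, br a a b = b;
  br_mal_r : forall a b, br b a a = b;
  mul_assoc : forall a b c, mul a (mul b c) = mul (mul a b) c
}.

Arguments br {p} _ _ _.
Arguments mul {p} _ _.

Section Defs.
Context {T : PreTruss}.

Definition sub_heap (S : T -> Prop) : Prop :=
  forall a b c, S a -> S b -> S c -> S (br a b c).

Definition normal_sub_heap (S : T -> Prop) : Prop :=
  (exists s, S s) /\ sub_heap S /\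
  (forall a e s, S e -> S s -> S (br (br a e s) a e)).

Definition sim (S : T -> Prop) (a b : T) : Prop :=
  exists s, S s /\ S (br a b s).

Definition closed_sub_heap (S : T -> Prop) : Prop :=
  sub_heap S /\
  (forall s s' t, S s -> S s' ->
     S (br (mul t s') (mul t s) s) /\ S (br (mul s' t) (mul s t) s)).

Definition paragon (P : T -> Prop) : Prop :=
  normal_sub_heap P /\ (forall a, closed_sub_heap (fun x => sim P x a)).

Definition ideal (I : T -> Prop) : Prop :=
  normal_sub_heap I /\ (forall t i, I i -> I (mul t i) /\ I (mul i t)).

Definition Ppa (P : T -> Prop) (p a : T) : T -> Prop :=
  fun x => exists q, P q /\ x = br q p a.

Definition completely_prime (P : T -> Prop) : Prop :=
  paragon P /\ (exists p, P p) /\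
  (forall p a b c, P p ->
     (P (br (mul a b) (mul a c) p) -> ideal (Ppa P p a) \/ P (br b c p)) /\
     (P (br (mul b a) (mul c a) p) -> ideal (Ppa P p a) \/ P (br b c p))).

(** Domain property of the pre-truss T/E, where E is a congruence on T
    (equality in the quotient is E; multiplication is induced from T).
    With E := eq this is the domain property of T itself. *)
Definition is_absorber_mod (E : T -> T -> Prop) (a : T) : Prop :=
  forall t, E (mul t a) a /\ E (mul a t) a.

Definition regular_mod (E : T -> T -> Prop) (a : T) : Prop :=
  forall b c, ~ E b c -> ~ E (mul a b) (mul a c) /\ ~ E (mul b a) (mul c a).

Definition domain_mod (E : T -> T -> Prop) : Prop :=
  forall a, ~ is_absorber_mod E a -> regular_mod E a.

Definition domain : Prop := @domain_mod (@eq T).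

(** T/P is a domain: the quotient pre-truss T/P has as elements the
    ~_P classes, with [a],[b] product [ab]; we express its domain property
    on representatives. *)
Definition quotient_domain (P : T -> Prop) : Prop := domain_mod (sim P).

End Defs.

(* For p in P one has [x, y, p] in P iff x ~_P y, and P_p^a is exactly the
   ~_P-class of a.  Since ~_P is a congruence of T (normality handles the
   bracket, closedness of the classes handles juxtaposition), that class is
   an ideal iff the class of a is the absorber of T/P.  The conditions
   defining complete primeness thus say: if ab ~ ac or ba ~ ca then a is an
   absorber of T/P or b ~ c, which is the contrapositive of the regularity of
   every non-absorber of T/P. *)
From Stdlib Require Import Classical.
Set Implicit Arguments.

Lemma br_flip (T : PreTruss) (a b c d e : T) :
  br a (br b c d) e = br (br a d c) b e.
Proof.
  transitivity (br (br (br a d c) b (br b c d)) (br b c d) e).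
  - f_equal. rewrite br_assoc, br_mal_r, <- br_assoc, br_mal_l, br_mal_r.
    reflexivity.
  - rewrite <- br_assoc, br_mal_l. reflexivity.
Qed.

Section NormalSubHeap.
Context {T : PreTruss}.
Variable P : T -> Prop.
Hypothesis HN : normal_sub_heap P.

Let P_br a b c : P a -> P b -> P c -> P (br a b c).
Proof. exact (proj1 (proj2 HN) a b c). Qed.

Lemma sim_br_mem a b p : sim P a b -> P p -> P (br a b p).
Proof.
  intros [s [Hs Hab]] Hp.
  replace (br a b p) with (br (br a b s) s p) by
    (rewrite <- br_assoc, br_mal_l; reflexivity).
  auto.
Qed.

Lemma br_memE p a b : P p -> (P (br a b p) <-> sim P a b).
Proof.
  intros Hp. split.
  - intros Hab. exists p. auto.
  - intros Hab. exact (sim_br_mem Hab Hp).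
Qed.

Lemma sim_refl a : sim P a a.
Proof. destruct (proj1 HN) as [s Hs]. exists s. rewrite br_mal_l. auto. Qed.

Lemma sim_sym a b : sim P a b -> sim P b a.
Proof.
  intros [p [Hp Hab]]. exists p. split; auto.
  replace (br b a p) with (br p (br a b p) p) by
    (rewrite br_flip, br_mal_l; reflexivity).
  auto.
Qed.

Lemma sim_trans a b c : sim P a b -> sim P b c -> sim P a c.
Proof.
  intros [p [Hp Hab]] Hbc. exists p. split; auto.
  replace (br a c p) with (br (br a b p) p (br b c p)) by
    (rewrite <- br_assoc, br_mal_l, br_assoc, br_mal_r; reflexivity).
  auto using sim_br_mem.
Qed.

Lemma sim_br1 x x' y z : sim P x x' -> sim P (br x y z) (br x' y z).
Proof.
  intros [p [Hp Hx]]. exists p. split; auto.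
  rewrite br_flip, <- (@br_assoc _ x y z z y), br_mal_l, br_mal_r. exact Hx.
Qed.

(* The normality condition, applied to [x, y, p] and [z, z', p]. *)
Lemma sim_br3 x y z z' : sim P z z' -> sim P (br x y z) (br x y z').
Proof.
  intros [p [Hp Hz]]. exists p. split; auto.
  replace (br (br x y z) (br x y z') p)
    with (br (br (br x y p) p (br z z' p)) (br x y p) p).
  - exact (proj2 (proj2 HN) (br x y p) p (br z z' p) Hp Hz).
  - rewrite <- (@br_assoc _ x y p p), br_mal_l, br_assoc, <- br_assoc, br_flip,
      br_mal_l, br_flip, br_assoc.
    reflexivity.
Qed.

Lemma sim_br2 x y y' z : sim P y y' -> sim P (br x y z) (br x y' z).
Proof.
  intros Hy.
  replace (br x y z) with (br x y' (br y' y z)) by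
    (rewrite br_assoc, br_mal_r; reflexivity).
  apply sim_br3.
  pose proof (sim_br1 y z (sim_sym Hy)) as Hyz. rewrite br_mal_l in Hyz.
  exact Hyz.
Qed.

Lemma sim_br x x' y y' z z' :
  sim P x x' -> sim P y y' -> sim P z z' -> sim P (br x y z) (br x' y' z').
Proof.
  intros Hx Hy Hz.
  apply sim_trans with (br x' y z); [apply sim_br1; exact Hx |].
  apply sim_trans with (br x' y' z); [apply sim_br2 | apply sim_br3]; assumption.
Qed.

Lemma Ppa_sim p a x : P p -> (Ppa P p a x <-> sim P x a).
Proof.
  intros Hp. split.
  - intros [q [Hq ->]]. exists p. split; auto.
    rewrite <- br_assoc, br_mal_l, br_mal_r. exact Hq.
  - intros Hx. exists (br x a p). split.
    + exact (sim_br_mem Hx Hp).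
    + rewrite <- br_assoc, br_mal_l, br_mal_r. reflexivity.
Qed.

Lemma normal_sim_class a : normal_sub_heap (fun x => sim P x a).
Proof.
  split; [exists a; apply sim_refl | split].
  - intros x y z Hx Hy Hz.
    pose proof (sim_br Hx Hy Hz) as Hxyz. rewrite br_mal_l in Hxyz. exact Hxyz.
  - intros x e s He Hs.
    pose proof (sim_br (sim_br (sim_refl x) He Hs) (sim_refl x) He) as Hxes.
    rewrite br_mal_r, br_mal_l in Hxes. exact Hxes.
Qed.

End NormalSubHeap.

Section Paragon.
Context {T : PreTruss}.
Variable P : T -> Prop.
Hypothesis HP : paragon P.

Let HN : normal_sub_heap P := proj1 HP.

(* Closedness of the class of y, used with s = y and s' = x. *)
Lemma mul_simr t x y : sim P x y -> sim P (mul t x) (mul t y).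
Proof.
  intros Hxy.
  destruct (proj2 (proj2 HP y) y x t (sim_refl HN y) Hxy) as [Hc _].
  pose proof (sim_br1 y (mul t y) Hc) as Hty.
  rewrite <- br_assoc, !br_mal_l, br_mal_r in Hty. exact Hty.
Qed.

Lemma mul_siml t x y : sim P x y -> sim P (mul x t) (mul y t).
Proof.
  intros Hxy.
  destruct (proj2 (proj2 HP y) y x t (sim_refl HN y) Hxy) as [_ Hc].
  pose proof (sim_br1 y (mul y t) Hc) as Hyt.
  rewrite <- br_assoc, !br_mal_l, br_mal_r in Hyt. exact Hyt.
Qed.

Lemma ideal_PpaE p a : P p -> (ideal (Ppa P p a) <-> is_absorber_mod (sim P) a).
Proof.
  intros Hp.
  assert (HPpa : forall x, Ppa P p a x <-> sim P x a) by (intro x; exact (Ppa_sim HN p a x Hp)).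
  split.
  - intros [_ Hideal] t.
    assert (Ha : Ppa P p a a) by (apply HPpa, sim_refl, HN).
    destruct (Hideal t a Ha) as [Hta Hat].
    split; apply HPpa; assumption.
  - intros Habs. split.
    + destruct (normal_sim_class HN a) as [[x0 Hx0] [Hsub Hnorm]].
      split; [exists x0; apply HPpa; exact Hx0 | split].
      * intros x1 x2 x3 H1 H2 H3. apply HPpa.
        apply HPpa in H1, H2, H3. auto.
      * intros x e s He Hs. apply HPpa.
        apply HPpa in He, Hs. auto.
    + intros t i Hi. apply HPpa in Hi. split; apply HPpa.
      * apply sim_trans with (mul t a); [exact HN | apply mul_simr; exact Hi | apply Habs].
      * apply sim_trans with (mul a t); [exact HN | apply mul_siml; exact Hi | apply Habs].
Qed.

Lemma completely_primeE :
  completely_prime P <->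
  forall a b c,
    (sim P (mul a b) (mul a c) -> is_absorber_mod (sim P) a \/ sim P b c) /\
    (sim P (mul b a) (mul c a) -> is_absorber_mod (sim P) a \/ sim P b c).
Proof.
  destruct (proj1 HN) as [p0 Hp0].
  split.
  - intros [_ [_ Hcp]] a b c.
    destruct (Hcp p0 a b c Hp0) as [Hl Hr].
    rewrite (ideal_PpaE a Hp0), !(br_memE HN p0 _ _ Hp0) in Hl.
    rewrite (ideal_PpaE a Hp0), !(br_memE HN p0 _ _ Hp0) in Hr.
    split; assumption.
  - intros Hcp. split; [exact HP | split; [exists p0; exact Hp0 |]].
    intros p a b c Hp.
    rewrite (ideal_PpaE a Hp), !(br_memE HN p _ _ Hp).
    apply Hcp.
Qed.

End Paragon.

Theorem theorem4p10 (T : PreTruss) (P : T -> Prop) (HP : paragon P) :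
  completely_prime P <-> quotient_domain P.
Proof.
  rewrite (completely_primeE HP).
  unfold quotient_domain, domain_mod, regular_mod.
  split.
  - intros Hcp a Habs b c Hbc. destruct (Hcp a b c). tauto.
  - intros Hdom a b c.
    destruct (classic (is_absorber_mod (sim P) a)) as [Habs | Habs]; [tauto |].
    destruct (classic (sim P b c)) as [Hbc | Hbc]; [tauto |].
    destruct (Hdom a Habs b c Hbc). tauto.
Qed.
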